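(* Let $I\subset\mathbb{K}[S_M]$ be an ideal and $G$ a sparse Gröbner basis of $I$ with respect to $\prec$. Then $\chi^{-1}(G)=\{\chi^{-1}(g):g\in G\}$ is a sparse Gröbner basis, with respect to $\prec_h$, of the ideal $\chi^{-1}(I)\subset\mathbb{K}[S_M^h]$ generated by the homogenizations of all elements of $I$.
   Context: Let $\mathbb{K}$ be a field of characteristic $0$, $M\subset\mathbb{R}^n$ a polytope with $0\in M$, $S_M\subset\mathbb{Z}^n$ the affine semigroup generated by $M\cap\mathbb{Z}^n$ and $S_M^h\subset\mathbb{Z}^{n+1}$ the one generated by $\{(s,1):s\in M\cap\mathbb{Z}^n\}$, both assumed pointed. $\mathbb{K}[S]$ is the semigroup algebra with monomials $X^s$, $X^sX^t=X^{s+t}$; $\mathbb{K}[S_M^h]$ is graded by $\deg X^{(s,d)}=d$. $\chi:\mathbb{K}[S_M^h]\to\mathbb{K}[S_M]$, $X^{(s,d)}\mapsto X^s$. The affine degree $\delta^A(X^s)$ is the least $d$ with $(s,d)\in S_M^h$, extended to polynomials by the maximum over the support; the homogenization of $f=\sum c_sX^s$ is $\chi^{-1}(f)=\sum c_sX^{(s,\delta^A(f))}$; the sparse degree of $f\in\mathbb{K}[S_M^h]$ is $\delta(f)=\delta^A(\chi(f))$. Fix a monomial order $<_M$ on $\mathbb{K}[S_M]$; the sparse order is $X^s\prec X^r$ iff $\delta^A(X^s)<\delta^A(X^r)$, or equality and $X^s<_MX^r$; the graded sparse order is $X^{(s,d)}\prec_hX^{(r,d')}$ iff $d<d'$, or $d=d'$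 and $X^s\prec X^r$. Divisibility: $X^{(s,d_s)}\mid_\delta X^{(r,d_r)}$ if some monomial $X^{(t,d_t)}$ satisfies $X^{(s,d_s)}X^{(t,d_t)}=X^{(r,d_r)}$ and $\delta(X^{(s,d_s)})+\delta(X^{(t,d_t)})=\delta(X^{(r,d_r)})$; for monomials of $\mathbb{K}[S_M]$, $X^s\mid_\delta X^r$ iff $\chi^{-1}(X^s)\mid_\delta\chi^{-1}(X^r)$. A sparse Gröbner basis of an ideal (of $\mathbb{K}[S_M]$ w.r.t. $\prec$, resp. of $\mathbb{K}[S_M^h]$ w.r.t. $\prec_h$) is a subset of the ideal generating it such that every nonzero element $f$ of the ideal has some element $g$ of the subset with $\mathrm{LM}(g)\mid_\delta\mathrm{LM}(f)$. *)

From HB Require Import structures.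
From mathcomp Require Import all_boot all_order all_algebra.
From mathcomp Require Import finmap.
From mathcomp Require Import reals.
From mathcomp.multinomials Require Import monalg.
From Stdlib Require Import ClassicalEpsilon.

Set Implicit Arguments.
Unset Strict Implicit.
Unset Printing Implicit Defensive.

Import Order.TTheory GRing.Theory Num.Theory.
Local Open Scope ring_scope.

(* Generic semigroup algebras K[S] for S a subset of an additive group E
   (E = Z^n or Z^(n+1)): elements of K[S] are the finitely supported
   K-valued functions on E (monalg's {malg K[E]}) with support in S;
   the monomial X^s is << s >>, and X^s X^t = X^(s+t).                  *)
Section SemigroupAlgebra.
Variables (K : fieldType) (E : zmodType).

Definition spoly := {malg K[E]}.

Definition pmul (f g : spoly) : spoly :=
  \sum_(s <- msupp f) \sum_(t <- msupp g) << f@_s * g@_t *g (s + t) >>.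

Definition inKS (S : E -> Prop) (f : spoly) : Prop :=
  forall e, e \in msupp f -> S e.

Definition is_ideal (S : E -> Prop) (I : spoly -> Prop) : Prop :=
  [/\ forall f, I f -> inKS S f,
      I 0,
      forall f g, I f -> I g -> I (f + g) &
      forall h f, inKS S h -> I f -> I (pmul h f)].

Definition gen_ideal (S : E -> Prop) (G : spoly -> Prop) (f : spoly) : Prop :=
  forall J, is_ideal S J -> (forall g, G g -> J g) -> J f.

Definition is_LM (lt : E -> E -> Prop) (f : spoly) (m : E) : Prop :=
  m \in msupp f /\ forall m', m' \in msupp f -> m' <> m -> lt m' m.

Definition sparse_GB (S : E -> Prop) (lt div : E -> E -> Prop)
    (I G : spoly -> Prop) : Prop :=
  [/\ forall g, G g -> I g,
      forall f, I f <-> gen_ideal S G f &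
      forall f, I f -> f <> 0 ->
        exists g mg mf, [/\ G g, is_LM lt g mg, is_LM lt f mf & div mg mf]].

Definition pointed (S : E -> Prop) : Prop :=
  forall s, S s -> S (- s) -> s = 0.

End SemigroupAlgebra.

Definition monomial_order (n : nat) (S : 'rV[int]_n -> Prop)
    (lt : 'rV[int]_n -> 'rV[int]_n -> Prop) : Prop :=
  [/\ forall s, S s -> ~ lt s s,
      forall s t u, S s -> S t -> S u -> lt s t -> lt t u -> lt s u,
      forall s t, S s -> S t -> s <> t -> lt s t \/ lt t s,
      forall s t u, S s -> S t -> S u -> lt s t -> lt (s + u) (t + u) &
      forall s, S s -> s <> 0 -> lt 0 s].

Section Polytope.
Variables (R : realType) (n : nat) (V : seq 'rV[R]_n).

Definition inM (x : 'rV[R]_n) : Prop :=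
  exists lam : 'I_(size V) -> R,
    [/\ forall i, 0 <= lam i,
        \sum_i lam i = 1 &
        x = \sum_i lam i *: V`_i].

Definition latM (s : 'rV[int]_n) : Prop := inM (map_mx (fun z : int => z%:~R) s).

Definition SM (s : 'rV[int]_n) : Prop :=
  exists l : seq 'rV[int]_n, (forall a, a \in l -> latM a) /\ s = \sum_(a <- l) a.

Definition SMh (u : 'rV[int]_n * int) : Prop :=
  exists l : seq 'rV[int]_n, [/\ forall a, a \in l -> latM a,
     u.1 = \sum_(a <- l) a & u.2 = (size l)%:Z].

Lemma deltaA_ex_aux (s : 'rV[int]_n) :
  (exists d : nat, SMh (s, d%:Z)) ->
  exists d : nat, (fun d => is_left (excluded_middle_informative (SMh (s, d%:Z)))) d.
Proof.
move=> [d Hd]; exists d; case: excluded_middle_informative => //.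
Qed.

Definition deltaA (s : 'rV[int]_n) : nat :=
  match excluded_middle_informative (exists d : nat, SMh (s, d%:Z)) with
  | left H => ex_minn (deltaA_ex_aux H)
  | right _ => 0%N
  end.

Definition deltaA_poly (K : fieldType) (f : spoly K 'rV[int]_n) : nat :=
  (\max_(s <- msupp f) deltaA s)%N.

Definition homogenize (K : fieldType) (f : spoly K 'rV[int]_n) : spoly K ('rV[int]_n * int)%type :=
  \sum_(s <- msupp f) << f@_s *g (s, (deltaA_poly f)%:Z) >>.

Definition sparse_delta (u : 'rV[int]_n * int) : nat := deltaA u.1.

Definition sparse_lt (ltM : 'rV[int]_n -> 'rV[int]_n -> Prop) (s r : 'rV[int]_n) : Prop :=
  (deltaA s < deltaA r)%N \/ (deltaA s = deltaA r /\ ltM s r).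

Definition graded_lt (ltM : 'rV[int]_n -> 'rV[int]_n -> Prop)
    (u v : 'rV[int]_n * int) : Prop :=
  u.2 < v.2 \/ (u.2 = v.2 /\ sparse_lt ltM u.1 v.1).

Definition div_h (u v : 'rV[int]_n * int) : Prop :=
  exists w, [/\ SMh w, u + w = v & (sparse_delta u + sparse_delta w)%N = sparse_delta v].

Definition div_S (s r : 'rV[int]_n) : Prop :=
  div_h (s, (deltaA s)%:Z) (r, (deltaA r)%:Z).

Definition hom_ideal (K : fieldType) (I : spoly K 'rV[int]_n -> Prop) :
    spoly K ('rV[int]_n * int)%type -> Prop :=
  gen_ideal SMh (fun p => exists f, I f /\ p = homogenize f).

End Polytope.

(* Call the slice of p at height d the dehomogenization of its degree-d
   component.  All slices of elements of the ideal generated by chi^{-1}(I)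
   lie in I.  So if p there has leading monomial (r, d), its slice at d lies in
   I with leading monomial r; a g in G whose leading monomial m delta-divides r
   then gives chi^{-1}(g), with leading monomial (m, delta(m)), and this
   delta-divides (r, d) since d >= delta(r).
   Conversely chi^{-1}(f), for f in I, lies in the ideal generated by
   chi^{-1}(G): if g in G and w satisfy LM(g) + w = LM(f) and
   delta(LM g) + delta(w) = delta(LM f), then for the right scalar c
     chi^{-1}(f) = c X^(w, delta w) chi^{-1}(g) + X^(0, k) chi^{-1}(f - c X^w g)
   and f - c X^w g has a smaller leading monomial.  This descent terminates
   because the lattice points of M are bounded, so only finitely many monomials
   have bounded affine degree. *)

From HB Require Import structures.
From mathcomp Require Import all_boot all_order all_algebra.
From mathcomp Require Import finmap.
From mathcomp Require Import reals.
From mathcomp.multinomials Require Import monalg.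
From mathcomp Require Import boolp zify.
From Stdlib Require Import ClassicalEpsilon.

Set Implicit Arguments.
Unset Strict Implicit.
Unset Printing Implicit Defensive.

Import Order.TTheory GRing.Theory Num.Theory.
Local Open Scope ring_scope.

Section SemigroupAlgebra.
Variables (K : fieldType) (E : zmodType).
Implicit Types (f g h : spoly K E) (c : K) (u w : E).

Lemma sum_mcoeff_pred1 f y : \sum_(k <- msupp f) f@_k *+ (k == y) = f@_y.
Proof.
under eq_bigr do rewrite mulrb; rewrite -big_mkcond /=.
have [yf|yf] := boolP (y \in msupp f).
  by rewrite -big_filter filter_pred1_uniq ?fset_uniq // big_seq1.
rewrite mcoeff_outdom // big1_seq // => k /andP[/eqP -> yf'].
by rewrite yf' in yf.
Qed.

Lemma mcoeff_pmulU c u f w : (pmul << c *g u >> f)@_w = c * f@_(w - u).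
Proof.
have [->|c0] := eqVneq c 0.
  by rewrite /pmul monalgU0 msupp0 big_seq_fset0 mcoeff0 mul0r.
rewrite /pmul msuppU (negbTE c0) big_seq_fset1 mcoeffUU raddf_sum /=.
rewrite -sum_mcoeff_pred1 mulr_sumr; apply: eq_bigr => t _.
by rewrite mcoeffU mulrnAr [u + t]addrC [_ == w]eq_sym -subr_eq [t == _]eq_sym.
Qed.

Lemma eq_pmulU_add f g h c1 c2 u w :
  (forall x, f@_x = c1 * g@_(x - u) + c2 * h@_(x - w)) ->
  f = pmul << c1 *g u >> g + pmul << c2 *g w >> h.
Proof. by move=> fE; apply/malgP => x; rewrite mcoeffD !mcoeff_pmulU fE. Qed.

Lemma pmul_sumU h f : pmul h f = \sum_(u <- msupp h) pmul << h@_u *g u >> f.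
Proof.
rewrite /pmul; apply: eq_big_seq => u uh.
by rewrite msuppU (negbTE (_ : h@_u != 0)) ?mcoeff_neq0 // big_seq_fset1 mcoeffUU.
Qed.

Lemma inKSU (S : E -> Prop) c u : S u -> inKS S << c *g u >>.
Proof. by move=> Su w /(fsubsetP msuppU_le); rewrite inE => /eqP ->. Qed.

Lemma ideal_sum (S : E -> Prop) (J : spoly K E -> Prop) (T : eqType) (r : seq T) F :
  is_ideal S J -> (forall i, i \in r -> J (F i)) -> J (\sum_(i <- r) F i).
Proof.
case=> _ J0 JD _; elim: r => [|a r IH] JF; first by rewrite big_nil.
rewrite big_cons; apply: JD; first exact/JF/mem_head.
by apply: IH => i ir; apply: JF; rewrite inE ir orbT.
Qed.

Variable S : E -> Prop.
Hypothesis S_add : forall a b, S a -> S b -> S (a + b).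

Lemma inKS_ideal : is_ideal S (@inKS K E S).
Proof.
split=> [//||f g Sf Sg|h f Sh Sf].
- by move=> e; rewrite msupp0.
- by move=> e /(fsubsetP (msuppD_le f g)); rewrite in_fsetU => /orP[/Sf|/Sg].
move=> w; rewrite -mcoeff_neq0 pmul_sumU raddf_sum /=.
under eq_bigr do rewrite mcoeff_pmulU.
have [[u /andP[uh]]|none] := pselect (exists u, (u \in msupp h) && (h@_u * f@_(w - u) != 0)).
  rewrite mulf_eq0 negb_or !mcoeff_neq0 => /andP[_ wuf].
  by have := S_add (Sh _ uh) (Sf _ wuf); rewrite addrC subrK.
rewrite big1_seq ?eqxx // => u /andP[_ uh]; apply/eqP/negPn/negP => nz.
by apply: none; exists u; rewrite uh.
Qed.

End SemigroupAlgebra.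

Section GeneratedIdeal.
Variables (K : fieldType) (E : zmodType) (S : E -> Prop).
Hypothesis S_add : forall a b, S a -> S b -> S (a + b).
Variable Gs : spoly K E -> Prop.
Hypothesis Gs_S : forall g, Gs g -> inKS S g.

Lemma gen_ideal_ideal : is_ideal S (gen_ideal S Gs).
Proof.
split=> [f|J []//|f g Jf Jg J idJ GJ|h f Sh Jf J idJ GJ].
- by apply; [exact: inKS_ideal|exact: Gs_S].
- by case: (idJ) => _ _ JD _; apply: JD; [apply: Jf|apply: Jg].
- by case: (idJ) => _ _ _ JM; apply: JM => //; apply: Jf.
Qed.

End GeneratedIdeal.

Lemma pairD (A B : zmodType) (a a' : A) (b b' : B) :
  (a, b) + (a', b') = (a + a', b + b').
Proof. by []. Qed.

Lemma pairB (A B : zmodType) (a a' : A) (b b' : B) :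
  (a, b) - (a', b') = (a - a', b - b').
Proof. by []. Qed.

Section Slice.
Variables (K : fieldType) (A B : zmodType).
Implicit Types (p q : spoly K (A * B)%type).

Definition slice (d : B) p : spoly K A :=
  \sum_(v <- msupp p) << p@_v *+ (v.2 == d) *g v.1 >>.

Lemma mcoeff_slice d p s : (slice d p)@_s = p@_(s, d).
Proof.
rewrite raddf_sum -sum_mcoeff_pred1; apply: eq_bigr => -[a b] _ /=.
by rewrite mcoeffU -mulrnA mulnb xpair_eqE andbC.
Qed.

Lemma slice0 d : slice d 0 = 0.
Proof. by apply/malgP => s; rewrite mcoeff_slice !mcoeff0. Qed.

Lemma sliceD d p q : slice d (p + q) = slice d p + slice d q.
Proof. by apply/malgP => s; rewrite mcoeffD !mcoeff_slice mcoeffD. Qed.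

Lemma slice_pmulU d c u p :
  slice d (pmul << c *g u >> p) = pmul << c *g u.1 >> (slice (d - u.2) p).
Proof.
by case: u => a b; apply/malgP => s; rewrite mcoeff_slice !mcoeff_pmulU mcoeff_slice pairB.
Qed.

End Slice.

Section Semigroups.
Variables (R : realType) (n : nat) (V : seq 'rV[R]_n).
Hypothesis M0 : inM V 0.
Local Notation E := 'rV[int]_n.
Implicit Types (s : E) (u : E * int).

Lemma SMh_SM u : SMh V u -> SM V u.1.
Proof. by case=> l [Hl e _]; exists l. Qed.

Lemma SMhD u v : SMh V u -> SMh V v -> SMh V (u + v).
Proof.
case=> l1 [H1 s1 e1] [l2 [H2 s2 e2]]; exists (l1 ++ l2); split.
- by move=> a; rewrite mem_cat => /orP[/H1|/H2].
- by rewrite big_cat /= s1 s2.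
- by rewrite size_cat /= e1 e2 PoszD.
Qed.

Lemma SMh0 (k : nat) : SMh V (0, k%:Z).
Proof.
have M0Z : latM V 0.
  by rewrite /latM (_ : map_mx _ 0 = 0) //; apply/matrixP => i j; rewrite !mxE.
exists (nseq k 0); split; last by rewrite size_nseq.
- by move=> a /nseqP[-> _].
- by rewrite big_nseq; elim: k => //= k <-; rewrite addr0.
Qed.

Lemma SMh_raise s (d k : nat) : SMh V (s, d%:Z) -> SMh V (s, (d + k)%N%:Z).
Proof. by move/SMhD/(_ (SMh0 k)); rewrite pairD addr0 PoszD. Qed.

Lemma deltaA_SMh s : SM V s -> SMh V (s, (deltaA V s)%:Z).
Proof.
case=> l [Hl e]; rewrite /deltaA; case: excluded_middle_informative => [ex|[]].
  by case: ex_minnP => d; case: excluded_middle_informative.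
by exists (size l), l.
Qed.

Lemma deltaA_min s (d : nat) : SMh V (s, d%:Z) -> (deltaA V s <= d)%N.
Proof.
move=> Sd; rewrite /deltaA; case: excluded_middle_informative => [ex|[]]; last by exists d.
case: ex_minnP => m _; apply; by case: excluded_middle_informative.
Qed.

Lemma SMh_deltaA_le s (d : nat) : SM V s -> (deltaA V s <= d)%N -> SMh V (s, d%:Z).
Proof. by move=> Ss /subnKC <-; apply/SMh_raise/deltaA_SMh. Qed.

Lemma SMh_deltaA u : SMh V u -> exists2 d : nat, u.2 = d%:Z & (deltaA V u.1 <= d)%N.
Proof.
case: u => s e Su; have [l [_ _ /= el]] := Su.
by exists (size l) => //; apply: deltaA_min; rewrite -el.
Qed.

Lemma deltaAD_le a b : SM V a -> SM V b ->
  (deltaA V (a + b) <= deltaA V a + deltaA V b)%N.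
Proof.
move=> Sa Sb; apply: deltaA_min.
by have := SMhD (deltaA_SMh Sa) (deltaA_SMh Sb); rewrite PoszD.
Qed.

Lemma div_h_raise u s (d k : nat) :
  div_h V u (s, d%:Z) -> div_h V u (s, (d + k)%N%:Z).
Proof.
case=> -[w e] [Sw uw dw]; exists ((w, e) + (0, k%:Z)); split.
- exact: SMhD Sw (SMh0 k).
- by rewrite addrA uw pairD addr0 PoszD.
- by rewrite pairD addr0.
Qed.

End Semigroups.

Section Finiteness.
Variables (R : realType) (n : nat) (V : seq 'rV[R]_n).
Local Notation E := 'rV[int]_n.

Lemma latM_bounded : exists B : nat, forall a : E, latM V a -> forall j, `|a 0 j| <= B%:Z.
Proof.
pose C := \sum_(i < size V) \sum_(j < n) `|V`_i 0 j|.
have C0 : 0 <= C by apply: sumr_ge0 => i _; apply: sumr_ge0.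
exists (Num.bound C) => a [lam [lam0 lam1 ea]] j.
have aj : (a 0 j)%:~R = \sum_(i < size V) lam i * V`_i 0 j :> R.
  have := congr1 (fun M : 'rV[R]_n => M 0 j) ea; rewrite /= !mxE => ->.
  by rewrite summxE; apply: eq_bigr => i _; rewrite mxE.
have lam_le1 i : lam i <= 1 by rewrite -lam1 (bigD1 i) //= lerDl sumr_ge0.
rewrite -(ler_int R) intr_norm aj.
apply: le_trans (ler_norm_sum _ _ _) (le_trans _ (ltW (archi_boundP C0))).
apply: ler_sum => i _; rewrite normrM (ger0_norm (lam0 i)).
apply: le_trans (_ : `|V`_i 0 j| <= _).
  by rewrite -[leRHS]mul1r ler_wpM2r.
by rewrite (bigD1 j) //= lerDl sumr_ge0.
Qed.

Lemma bounded_rows_finite (N : nat) : exists L : seq E,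
  forall s : E, (forall j, `|s 0 j| <= N%:Z) -> s \in L.
Proof.
pose row_of (f : {ffun 'I_n -> 'I_(N + N).+1}) : E := \row_j ((f j : nat)%:Z - N%:Z).
exists [seq row_of f | f <- enum {ffun 'I_n -> 'I_(N + N).+1}] => s sN.
pose f := [ffun j => (inord (absz (s 0 j + N%:Z)) : 'I_(N + N).+1)].
have -> : s = row_of f.
  by apply/matrixP => i j; rewrite !mxE ffunE (ord1 i) inordK; have := sN j; lia.
by rewrite map_f ?mem_enum.
Qed.

Lemma SM_deltaA_finite (D : nat) : exists L : seq E,
  forall s, SM V s -> (deltaA V s <= D)%N -> s \in L.
Proof.
have [B HB] := latM_bounded; have [L HL] := bounded_rows_finite (D * B).
exists L => s Ss sD; apply: HL => j.
have [l [Hl /= es /eqP]] := deltaA_SMh Ss; rewrite eqz_nat => /eqP dl.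
apply: le_trans (_ : (size l * B)%N%:Z <= _); last by rewrite lez_nat leq_mul2r -dl sD orbT.
rewrite es summxE; elim: l Hl {sD dl es} => [|a l IH] Hl; first by rewrite big_nil normr0.
rewrite big_cons /= mulSn PoszD; apply: le_trans (ler_normD _ _) _.
rewrite lerD ?IH ?HB // => [|b bl]; apply: Hl; by rewrite inE ?eqxx ?bl ?orbT.
Qed.

End Finiteness.

Section StrictTotalOrders.
Variables (T : Type) (S : T -> Prop).
Implicit Type lt : T -> T -> Prop.

Definition irreflexive_on lt := forall s, S s -> ~ lt s s.

Definition transitive_on lt :=
  forall s t u, S s -> S t -> S u -> lt s t -> lt t u -> lt s u.

Definition strict_total_on lt := [/\ irreflexive_on lt, transitive_on lt &
  forall s t, S s -> S t -> s <> t -> lt s t \/ lt t s].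

Lemma lex_strict_total (disp : Order.disp_t) (X : orderType disp) (key : T -> X) lt :
  irreflexive_on lt -> transitive_on lt ->
  (forall s t, S s -> S t -> s <> t -> key s = key t -> lt s t \/ lt t s) ->
  strict_total_on (fun s t => (key s < key t)%O \/ key s = key t /\ lt s t).
Proof.
move=> irr tr tot; split.
- by move=> s Ss [|[_ /(irr s Ss)]]; rewrite ?ltxx.
- move=> s t u Ss St Su [st|[-> st]] [tu|[<- tu]]; [left; exact: lt_trans tu|by left..|].
  by right; split=> //; apply: tr st tu.
- move=> s t Ss St st.
  case: (ltgtP (key s) (key t)) => [|| e]; [by left; left|by right; left|].
  by case: (tot s t Ss St st e) => ?; [left|right]; right.
Qed.

End StrictTotalOrders.

Lemma sub_count_lt (T : eqType) (a1 a2 : pred T) (s : seq T) x :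
  subpred a1 a2 -> x \in s -> a2 x -> ~~ a1 x -> (count a1 s < count a2 s)%N.
Proof.
move=> sub12; elim: s => [//|y s IH]; rewrite inE => /predU1P[<-|xs] a2x a1x /=.
  by rewrite (negbTE a1x) a2x ltnS sub_count.
apply: leq_trans (_ : (a1 y + count a2 s <= _)%N); first by rewrite ltn_add2l IH.
by rewrite leq_add2r; case: (a1 y) (sub12 y) => // ->.
Qed.

Lemma finite_lt_ind (T : eqType) (S : T -> Prop) (lt : T -> T -> Prop) :
  irreflexive_on S lt -> transitive_on S lt ->
  (forall x, S x -> exists L : seq T, forall y, S y -> lt y x -> y \in L) ->
  forall P : T -> Prop, (forall x, S x -> (forall y, S y -> lt y x -> P y) -> P x) ->
  forall x, S x -> P x.
Proof.
move=> irr tr fin P IH x Sx; have [L xL] := fin x Sx.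
pose below z := [pred y | `[< S y /\ lt y z >]].
suff: forall k z, S z -> (forall y, S y -> lt y z -> y \in L) ->
    (count (below z) L < k)%N -> P z by move/(_ _ x Sx xL (ltnSn _)).
elim=> [//|k IHk] z Sz zL zk; apply: IH => // y Sy yz.
have yL y' : S y' -> lt y' y -> y' \in L.
  by move=> Sy' y'y; apply: zL (tr _ _ _ Sy' Sy Sz y'y yz).
apply: IHk yL _ => //; rewrite -ltnS (leq_trans _ zk) // ltnS.
apply: (sub_count_lt (x := y)); rewrite ?zL //.
- by move=> y' /asboolP[Sy' y'y]; apply/asboolP; split; last exact: tr _ _ _ Sy' Sy Sz y'y yz.
- exact/asboolP.
- by apply/asboolP => -[_ /(irr y Sy)].
Qed.

Lemma seq_max_exists (T : eqType) (S : T -> Prop) (lt : T -> T -> Prop) (l : seq T) x0 :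
  strict_total_on S lt -> x0 \in l -> (forall x, x \in l -> S x) ->
  exists2 m, m \in l & forall x, x \in l -> x <> m -> lt x m.
Proof.
case=> _ tr tot; elim: l x0 => [//|a [|b l] IH] x0 _ lS.
  by exists a => [|x]; rewrite ?mem_head // inE => /eqP.
have Sa : S a := lS a (mem_head _ _).
have lS' x : x \in b :: l -> S x by move=> xl; apply: lS; rewrite inE xl orbT.
have [m ml Hm] := IH b (mem_head _ _) lS'.
have Sm : S m := lS' m ml.
have [ma|nma] := pselect (lt m a).
  exists a => [|x]; first exact: mem_head.
  rewrite inE => /predU1P[-> //|xl] xa; have [-> //|xm] := eqVneq x m.
  exact: tr (lS' x xl) Sm Sa (Hm x xl (elimN eqP xm)) ma.
exists m => [|x]; first by rewrite inE ml orbT.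
rewrite inE => /predU1P[-> am|]; last exact: Hm.
by case: (tot a m Sa Sm am) => // /nma.
Qed.

Section SparseOrders.
Variables (R : realType) (n : nat) (V : seq 'rV[R]_n).
Variable ltM : 'rV[int]_n -> 'rV[int]_n -> Prop.
Hypothesis ltM_order : monomial_order (SM V) ltM.

Lemma sparse_lt_strict_total : strict_total_on (SM V) (sparse_lt V ltM).
Proof.
case: ltM_order => irr tr tot _ _.
exact: (lex_strict_total (key := deltaA V) irr tr (fun s t Ss St st _ => tot s t Ss St st)).
Qed.

Lemma graded_lt_strict_total : strict_total_on (SMh V) (graded_lt V ltM).
Proof.
have [irr tr tot] := sparse_lt_strict_total.
apply: (lex_strict_total (key := snd)).
- by move=> u /SMh_SM /irr.
- by move=> u v w /SMh_SM Su /SMh_SM Sv /SMh_SM Sw; apply: tr.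
- move=> [s d] [t e] /SMh_SM Ss /SMh_SM St /= ne de; apply: tot => // st.
  by apply: ne; rewrite st de.
Qed.

Lemma sparse_lt_deltaA s t : sparse_lt V ltM s t -> (deltaA V s <= deltaA V t)%N.
Proof. by case=> [/ltnW|[-> _]]. Qed.

Lemma sparse_lt_ind (P : 'rV[int]_n -> Prop) :
  (forall m, SM V m -> (forall m', SM V m' -> sparse_lt V ltM m' m -> P m') -> P m) ->
  forall m, SM V m -> P m.
Proof.
have [irr tr _] := sparse_lt_strict_total; apply: finite_lt_ind irr tr _ P.
move=> m _; have [L HL] := SM_deltaA_finite V (deltaA V m).
by exists L => s Ss /sparse_lt_deltaA; apply: HL.
Qed.

End SparseOrders.

Section LeadingMonomials.
Variables (K : fieldType) (E : zmodType) (S : E -> Prop) (lt : E -> E -> Prop).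
Hypothesis lt_total : strict_total_on S lt.

Lemma LM_exists (f : spoly K E) : f <> 0 -> inKS S f -> exists m, is_LM lt f m.
Proof.
move=> f0 Sf; have [k kf] : exists k, k \in msupp f.
  apply: contrapT => nok; apply/f0/malgP => k; rewrite mcoeff0 mcoeff_outdom //.
  by apply/negP => kf; apply: nok; exists k.
by have [m mf Hm] := seq_max_exists lt_total kf Sf; exists m.
Qed.

Lemma LM_unique (f : spoly K E) m m' :
  inKS S f -> is_LM lt f m -> is_LM lt f m' -> m = m'.
Proof.
case: lt_total => irr tr _ Sf [mf Hm] [m'f Hm']; apply: contrapT => ne.
have Sm := Sf m mf; have Sm' := Sf m' m'f.
exact: irr Sm (tr _ _ _ Sm Sm' Sm (Hm' m mf ne) (Hm m' m'f (nesym ne))).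
Qed.

End LeadingMonomials.

Section Homogenization.
Variables (K : fieldType) (R : realType) (n : nat) (V : seq 'rV[R]_n).
Variable ltM : 'rV[int]_n -> 'rV[int]_n -> Prop.
Local Notation E := 'rV[int]_n.
Local Notation hom := (@homogenize R n V K).
Local Notation dP := (@deltaA_poly R n V K).
Local Notation slt := (sparse_lt V ltM).
Local Notation glt := (graded_lt V ltM).
Implicit Types (f g : spoly K E).

Lemma mcoeff_homogenize f s e : (hom f)@_(s, e) = if e == (dP f)%:Z then f@_s else 0.
Proof.
rewrite raddf_sum /=; have [->|ne] := eqVneq e (dP f)%:Z.
  by rewrite -sum_mcoeff_pred1; apply: eq_bigr => k _; rewrite mcoeffU xpair_eqE eqxx andbT.
by rewrite big1 // => k _; rewrite mcoeffU xpair_eqE [_ == e]eq_sym (negbTE ne) andbF.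
Qed.

Lemma msupp_homogenize f u :
  (u \in msupp (hom f)) = (u.1 \in msupp f) && (u.2 == (dP f)%:Z).
Proof.
case: u => s e; rewrite -!mcoeff_neq0 mcoeff_homogenize /=.
by case: ifPn; rewrite ?andbT ?andbF ?eqxx.
Qed.

Lemma homogenize0 : hom 0 = 0.
Proof. by rewrite /homogenize msupp0 big_seq_fset0. Qed.

Lemma deltaA_le_poly f s : s \in msupp f -> (deltaA V s <= dP f)%N.
Proof. by move=> sf; apply: leq_bigmax_seq. Qed.

Lemma deltaA_poly_LM f m : is_LM slt f m -> dP f = deltaA V m.
Proof.
case=> mf Hm; apply/eqP; rewrite eqn_leq deltaA_le_poly // andbT.
apply/bigmax_leqP_seq => s sf _; have [-> //|sm] := eqVneq s m.
by case: (Hm s sf (elimN eqP sm)) => [/ltnW|[-> _]].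
Qed.

Lemma homogenize_LM g m : is_LM slt g m -> is_LM glt (hom g) (m, (deltaA V m)%:Z).
Proof.
move=> LMg; have dg := deltaA_poly_LM LMg; case: LMg => mg Hm.
split=> [|[s e]]; first by rewrite msupp_homogenize /= mg dg eqxx.
rewrite msupp_homogenize dg /= => /andP[sg /eqP ->] ne; right; split=> //=.
by apply: Hm => // sm; apply: ne; rewrite sm.
Qed.

Lemma slice_homogenize d f : slice d (hom f) = if d == (dP f)%:Z then f else 0.
Proof.
apply/malgP => s; rewrite mcoeff_slice mcoeff_homogenize.
by case: ifP; rewrite ?mcoeff0.
Qed.

Lemma slice_LM (p : spoly K (E * int)%type) r d :
  is_LM glt p (r, d) -> is_LM slt (slice d p) r.
Proof.
case=> rdp Hp; split=> [|s]; first by rewrite -mcoeff_neq0 mcoeff_slice mcoeff_neq0.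
rewrite -mcoeff_neq0 mcoeff_slice mcoeff_neq0 => sdp sr.
have ne : (s, d) <> (r, d) by case.
by case: (Hp _ sdp ne) => /= [|[_ //]]; rewrite ltxx.
Qed.


Hypothesis M0 : inM V 0.

Lemma homogenize_inKS f : inKS (SM V) f -> inKS (SMh V) (hom f).
Proof.
move=> Sf [s e]; rewrite msupp_homogenize /= => /andP[sf /eqP ->].
exact/(SMh_deltaA_le M0 (Sf _ sf))/deltaA_le_poly.
Qed.

End Homogenization.

Section SlicedIdeal.
Variables (K : fieldType) (R : realType) (n : nat) (V : seq 'rV[R]_n).
Local Notation E := 'rV[int]_n.
Variable I : spoly K E -> Prop.
Hypothesis I_ideal : is_ideal (SM V) I.
Hypothesis M0 : inM V 0.

Definition slices_in (p : spoly K (E * int)%type) : Prop :=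
  inKS (SMh V) p /\ forall d, I (slice d p).

Lemma slices_in_ideal : is_ideal (SMh V) slices_in.
Proof.
have [IS I0 ID IM] := I_ideal; have [_ S0 SD SM'] := inKS_ideal K (@SMhD R n V).
split=> [p []//| |p q [Sp Ip] [Sq Iq]|h p Sh [Sp Ip]].
- by split=> // d; rewrite slice0.
- by split=> [|d]; [exact: SD|rewrite sliceD; exact: ID].
split=> [|d]; first exact: SM'.
rewrite pmul_sumU (big_morph _ (@sliceD K _ _ d) (@slice0 K _ _ d)).
apply: ideal_sum I_ideal _.
by move=> u uh; rewrite slice_pmulU; apply: IM (Ip _); exact: inKSU (SMh_SM (Sh u uh)).
Qed.

Lemma hom_ideal_ideal : is_ideal (SMh V) (hom_ideal V I).
Proof.
have [IS _ _ _] := I_ideal; apply: (gen_ideal_ideal (@SMhD R n V)) => _ [f [If ->]].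
by apply: (homogenize_inKS M0); exact: IS.
Qed.

Lemma hom_ideal_slices_in p : hom_ideal V I p -> slices_in p.
Proof.
have [IS I0 _ _] := I_ideal; apply; first exact: slices_in_ideal.
move=> _ [f [If ->]]; split; first by apply: (homogenize_inKS M0); exact: IS.
by move=> d; rewrite slice_homogenize; case: ifP.
Qed.

End SlicedIdeal.

Section Reduction.
Variables (K : fieldType) (R : realType) (n : nat) (V : seq 'rV[R]_n).
Variable ltM : 'rV[int]_n -> 'rV[int]_n -> Prop.
Hypothesis ltM_order : monomial_order (SM V) ltM.
Local Notation E := 'rV[int]_n.
Local Notation hom := (@homogenize R n V K).
Local Notation dP := (@deltaA_poly R n V K).
Local Notation slt := (sparse_lt V ltM).
Implicit Types (f g : spoly K E).

Lemma LM_reduction_lt f g m mg w :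
  inKS (SM V) g -> is_LM slt f m -> is_LM slt g mg -> SM V w ->
  mg + w = m -> (deltaA V mg + deltaA V w)%N = deltaA V m ->
  forall s, s \in msupp (f + pmul << - (f@_m / g@_mg) *g w >> g) -> slt s m.
Proof.
move=> Sg [mf LMf] [mgg LMg] Sw emg dmg s.
rewrite -mcoeff_neq0 mcoeffD mcoeff_pmulU.
have [->|sm] := eqVneq s m.
  by rewrite -emg addrK mulNr divfK ?subrr ?eqxx // mcoeff_neq0.
have [->|] := eqVneq g@_(s - w) 0.
  by rewrite mulr0 addr0 mcoeff_neq0 => sf; apply: LMf sf (elimN eqP sm).
rewrite mcoeff_neq0; set t := s - w => tg _.
have es : s = t + w by rewrite subrK.
have St := Sg t tg; have Smg := Sg mg mgg.
have dle := deltaAD_le St Sw; rewrite -es in dle.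
have tmg : t <> mg by move=> etm; move/eqP: sm; apply; rewrite es etm.
case: (LMg t tg tmg) => [|[dt ltt]]; first by left; lia.
have [|ge] := ltnP (deltaA V s) (deltaA V m); first by left.
right; split; first lia.
by case: ltM_order => _ _ _ comp _; rewrite es -emg; apply: comp.
Qed.

Lemma homogenize_reduction f g f' c w :
  f' = f + pmul << - c *g w >> g -> dP f = (dP g + deltaA V w)%N -> (dP f' <= dP f)%N ->
  hom f = pmul << c *g (w, (deltaA V w)%:Z) >> (hom g)
          + pmul << 1 *g (0, (dP f - dP f')%:Z) >> (hom f').
Proof.
move=> ef' dfg df'; apply: eq_pmulU_add => -[s e].
rewrite !pairB subr0 mul1r !mcoeff_homogenize.
have [-> | ne] := eqVneq e (dP f)%:Z.
  have -> : ((dP f)%:Z - (deltaA V w)%:Z == (dP g)%:Z) by apply/eqP; lia.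
  have -> : ((dP f)%:Z - (dP f - dP f')%:Z == (dP f')%:Z) by apply/eqP; lia.
  by rewrite ef' mcoeffD mcoeff_pmulU mulNr addrCA subrr addr0.
have -> : (e - (deltaA V w)%:Z == (dP g)%:Z) = false by apply/eqP; lia.
have -> : (e - (dP f - dP f')%:Z == (dP f')%:Z) = false by apply/eqP; lia.
by rewrite mulr0 addr0.
Qed.

End Reduction.

Section HomogenizedBasis.
Variables (K : fieldType) (R : realType) (n : nat) (V : seq 'rV[R]_n).
Hypothesis M0 : inM V 0.
Variable ltM : 'rV[int]_n -> 'rV[int]_n -> Prop.
Hypothesis ltM_order : monomial_order (SM V) ltM.
Local Notation E := 'rV[int]_n.
Local Notation hom := (@homogenize R n V K).
Local Notation dP := (@deltaA_poly R n V K).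
Local Notation slt := (sparse_lt V ltM).
Local Notation glt := (graded_lt V ltM).
Variables (I G : spoly K E -> Prop).
Hypothesis I_ideal : is_ideal (SM V) I.
Hypothesis G_GB : sparse_GB (SM V) slt (div_S V) I G.
Local Notation homG := (fun p => exists g, G g /\ p = hom g).

Lemma homG_inKS p : homG p -> inKS (SMh V) p.
Proof.
case=> g [Gg ->]; have [IS _ _ _] := I_ideal; have [GI _ _] := G_GB.
exact/(homogenize_inKS M0)/IS/GI.
Qed.

Lemma gen_homG_ideal : is_ideal (SMh V) (gen_ideal (SMh V) homG).
Proof. exact: (gen_ideal_ideal (@SMhD R n V) homG_inKS). Qed.

Lemma homG_hom_ideal p : homG p -> hom_ideal V I p.
Proof.
by case=> g [Gg ->] J _; apply; exists g; split=> //; case: G_GB => GI _ _; exact: GI.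
Qed.

Lemma homogenize_LM_in_gen_ideal m : SM V m ->
  forall f, I f -> is_LM slt f m -> gen_ideal (SMh V) homG (hom f).
Proof.
have [IS _ ID IM] := I_ideal; have [GI _ GB] := G_GB.
have [_ H0 HD HM] := gen_homG_ideal.
have slt_total := sparse_lt_strict_total ltM_order.
move: m; apply: (sparse_lt_ind ltM_order) => m Sm IH f If LMf.
have f0 : f <> 0 by move=> f0; move: LMf.1; rewrite f0 msupp0.
have [g [mg [m' [Gg LMg LMf' [[w e] [Sw]]]]]] := GB f If f0.
rewrite (LM_unique slt_total (IS f If) LMf' LMf) pairD => -[emg _] dmg.
have Sw1 := SMh_SM Sw; have Sg := IS g (GI g Gg).
pose f' := f + pmul << - (f@_m / g@_mg) *g w >> g.
have If' : I f' by apply: ID => //; apply: IM (GI g Gg); exact: inKSU.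
have lt_m := LM_reduction_lt ltM_order Sg LMf LMg Sw1 emg dmg.
have df' : (dP f' <= dP f)%N.
  rewrite (deltaA_poly_LM LMf); apply/bigmax_leqP_seq => s sf _.
  exact/sparse_lt_deltaA/lt_m.
rewrite (homogenize_reduction (erefl f') _ df'); last first.
  by rewrite (deltaA_poly_LM LMf) (deltaA_poly_LM LMg).
apply: HD; apply: HM; first exact: inKSU (deltaA_SMh Sw1).
- by move=> J _; apply; exists g.
- exact: inKSU (SMh0 M0 _).
have [->|/eqP f'0] := eqVneq f' 0; first by rewrite homogenize0.
have [m'' LMf''] := LM_exists slt_total f'0 (IS f' If').
exact: IH (IS f' If' m'' LMf''.1) (lt_m _ LMf''.1) f' If' LMf''.
Qed.

Lemma homogenize_in_gen_ideal f : I f -> gen_ideal (SMh V) homG (hom f).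
Proof.
move=> If; have [IS _ _ _] := I_ideal.
have [->|/eqP f0] := eqVneq f 0.
  by rewrite homogenize0; case: gen_homG_ideal.
have [m LMf] := LM_exists (sparse_lt_strict_total ltM_order) f0 (IS f If).
exact: homogenize_LM_in_gen_ideal (IS f If m LMf.1) f If LMf.
Qed.

Lemma hom_ideal_LM_div p : hom_ideal V I p -> p <> 0 ->
  exists g mg mp, [/\ exists g0, G g0 /\ g = hom g0, is_LM glt g mg,
                      is_LM glt p mp & div_h V mg mp].
Proof.
move=> Ip p0; have [Sp slices] := hom_ideal_slices_in I_ideal M0 Ip.
have [[r d] LMp] := LM_exists (graded_lt_strict_total ltM_order) p0 Sp.
have [IS _ _ _] := I_ideal; have [_ _ GB] := G_GB.
have LMq := slice_LM LMp.
have q0 : slice d p <> 0 by move=> q0; move: LMq.1; rewrite q0 msupp0.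
have [g [mg [r' [Gg LMg LMr' div_mg]]]] := GB _ (slices d) q0.
have er := LM_unique (sparse_lt_strict_total ltM_order) (IS _ (slices d)) LMr' LMq.
exists (hom g), (mg, (deltaA V mg)%:Z), (r, d); split=> //; first by exists g.
  exact: homogenize_LM.
have [k /= -> rk] := SMh_deltaA (Sp _ LMp.1); rewrite -(subnKC rk).
by apply: (div_h_raise M0); rewrite -er.
Qed.

End HomogenizedBasis.

Theorem mainTheorem7
  (K : fieldType) (charK0 : [pchar K] =i pred0)
  (R : realType) (n : nat) (V : seq 'rV[R]_n)
  (M0 : inM V 0)
  (SM_pointed : pointed (SM V))
  (SMh_pointed : pointed (SMh V))
  (ltM : 'rV[int]_n -> 'rV[int]_n -> Prop)
  (ltM_order : monomial_order (SM V) ltM)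
  (I G : spoly K 'rV[int]_n -> Prop)
  (I_ideal : is_ideal (SM V) I)
  (G_GB : sparse_GB (SM V) (sparse_lt V ltM) (div_S V) I G) :
  sparse_GB (SMh V) (graded_lt V ltM) (div_h V) (hom_ideal V I)
    (fun p => exists g, G g /\ p = homogenize V g).
Proof.
split=> [|p|]; first exact: homG_hom_ideal G_GB.
- split=> Ip.
  + apply: Ip (gen_homG_ideal M0 I_ideal G_GB) _ => _ [f [If ->]].
    exact: (homogenize_in_gen_ideal M0 ltM_order I_ideal G_GB If).
  + exact: Ip (hom_ideal_ideal I_ideal M0) (homG_hom_ideal G_GB).
- exact: (hom_ideal_LM_div M0 ltM_order I_ideal G_GB).
Qed.
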